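(* Consider in $d=4$ the classes $\mathcal{C}^{(4)}_1=\{Y\otimes Y, I\otimes Y, Y\otimes I\}$, $\mathcal{C}^{(4)}_2=\{Y\otimes Z, X\otimes X, Z\otimes Y\}$, $\mathcal{C}^{(4)}_3=\{Z\otimes I, I\otimes Z, Z\otimes Z\}$, and in $d=8$ the classes (writing $ABC$ for $A\otimes B\otimes C$) $\mathcal{C}^{(8)}_1=\{IIY,YYI,YYY,IYY,YII,IYI,YIY\}$, $\mathcal{C}^{(8)}_2=\{IXI,XIX,XXX,IXX,IIX,XII,XXI\}$, $\mathcal{C}^{(8)}_3=\{ZII,IZZ,ZZZ,IIZ,IZI,ZIZ,ZZI\}$, $\mathcal{C}^{(8)}_4=\{IZX,YZI,YIX,ZYY,XYZ,ZXZ,XXY\}$, $\mathcal{C}^{(8)}_5=\{XIZ,XYI,IYZ,ZXX,YZX,YXY,ZZY\}$. The common eigenbases of $\mathcal{C}^{(4)}_1,\mathcal{C}^{(4)}_2,\mathcal{C}^{(4)}_3$ form a strongly unextendible set of three mutually unbiased bases of $\mathbb{C}^4$, and the common eigenbases of $\mathcal{C}^{(8)}_1,\dots,\mathcal{C}^{(8)}_5$ form a strongly unextendible set of five mutually unbiased bases of $\mathbb{C}^8$; that is, in each case there is no vector $v\in\mathbb{C}^d$ with $|\langle v|b\rangle|^2=\|v\|^2/d$ for every vector $b$ of every one of the bases.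
   Context: $X,Y,Z$ are the standard single-qubit Pauli matrices and $I$ the $2\times 2$ identity. Each listed class consists of mutually commuting operators, and its common eigenbasis (the joint eigenbasis of the operators in the class) is an orthonormal basis of $\mathbb{C}^d$. Two orthonormal bases of $\mathbb{C}^d$ are mutually unbiased if $|\langle a|b\rangle|=1/\sqrt d$ for all vectors $a$ of the first and $b$ of the second. A set of mutually unbiased bases is strongly unextendible if there is no vector in $\mathbb{C}^d$ unbiased with respect to all of the bases. *)

(* Complex scalars: an arbitrary numClosedFieldType C
   (e.g. the complex numbers R[i] over any real closed field, incl. C = complex R). *)
From HB Require Import structures.
From mathcomp Require Import all_boot all_order all_algebra.
From mathcomp.real_closed Require Import mxtens.
Set Implicit Arguments. Unset Strict Implicit. Unset Printing Implicit Defensive.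
Import Order.TTheory GRing.Theory Num.Theory.
Local Open Scope ring_scope.

Section Pauli.
Variable C : numClosedFieldType.

(* Pauli matrices (row index first): X = [[0,1],[1,0]], Y = [[0,-i],[i,0]],
   Z = [[1,0],[0,-1]]. *)
Definition pI : 'M[C]_2 := 1%:M.
Definition pX : 'M[C]_2 := \matrix_(i, j) (if i == j then 0 else 1).
Definition pY : 'M[C]_2 :=
  \matrix_(i, j) (if i == j then 0 else if (i : nat) == 0%N then - 'i else 'i).
Definition pZ : 'M[C]_2 :=
  \matrix_(i, j) (if i == j then (if (i : nat) == 0%N then 1 else -1) else 0).

Definition t2 (A B : 'M[C]_2) : 'M[C]_4 := A *t B.
Definition t3 (A B D : 'M[C]_2) : 'M[C]_8 := (A *t B) *t D.

Definition dotC (d : nat) (u v : 'cV[C]_d) : C := \sum_(i < d) (u i 0)^* * v i 0.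

Definition orthonormal_basis (d : nat) (b : 'I_d -> 'cV[C]_d) : Prop :=
  forall i j, dotC (b i) (b j) = (i == j)%:R.

Definition common_eigenbasis (d : nat) (cls : seq 'M[C]_d) (b : 'I_d -> 'cV[C]_d) : Prop :=
  orthonormal_basis b /\
  forall i, forall M, M \in cls -> exists lam : C, M *m b i = lam *: b i.

(* |<a|b>| = 1/sqrt d, written squared *)
Definition mutually_unbiased (d : nat) (b1 b2 : 'I_d -> 'cV[C]_d) : Prop :=
  forall i j, `|dotC (b1 i) (b2 j)| ^+ 2 = d%:R^-1.

Definition MUB_set (n d : nat) (B : 'I_n -> 'I_d -> 'cV[C]_d) : Prop :=
  forall k l, k != l -> mutually_unbiased (B k) (B l).

Definition strongly_unextendible (n d : nat) (B : 'I_n -> 'I_d -> 'cV[C]_d) : Prop :=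
  forall v : 'cV[C]_d,
    (forall k i, `|dotC v (B k i)| ^+ 2 = dotC v v / d%:R) -> v = 0.

Definition C4_1 : seq 'M[C]_4 := [:: t2 pY pY; t2 pI pY; t2 pY pI].
Definition C4_2 : seq 'M[C]_4 := [:: t2 pY pZ; t2 pX pX; t2 pZ pY].
Definition C4_3 : seq 'M[C]_4 := [:: t2 pZ pI; t2 pI pZ; t2 pZ pZ].
Definition cls4 (k : 'I_3) : seq 'M[C]_4 := nth [::] [:: C4_1; C4_2; C4_3] k.

Definition C8_1 : seq 'M[C]_8 :=
  [:: t3 pI pI pY; t3 pY pY pI; t3 pY pY pY; t3 pI pY pY; t3 pY pI pI; t3 pI pY pI; t3 pY pI pY].
Definition C8_2 : seq 'M[C]_8 :=
  [:: t3 pI pX pI; t3 pX pI pX; t3 pX pX pX; t3 pI pX pX; t3 pI pI pX; t3 pX pI pI; t3 pX pX pI].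
Definition C8_3 : seq 'M[C]_8 :=
  [:: t3 pZ pI pI; t3 pI pZ pZ; t3 pZ pZ pZ; t3 pI pI pZ; t3 pI pZ pI; t3 pZ pI pZ; t3 pZ pZ pI].
Definition C8_4 : seq 'M[C]_8 :=
  [:: t3 pI pZ pX; t3 pY pZ pI; t3 pY pI pX; t3 pZ pY pY; t3 pX pY pZ; t3 pZ pX pZ; t3 pX pX pY].
Definition C8_5 : seq 'M[C]_8 :=
  [:: t3 pX pI pZ; t3 pX pY pI; t3 pI pY pZ; t3 pZ pX pX; t3 pY pZ pX; t3 pY pX pY; t3 pZ pZ pY].
Definition cls8 (k : 'I_5) : seq 'M[C]_8 := nth [::] [:: C8_1; C8_2; C8_3; C8_4; C8_5] k.

End Pauli.

(* Each class together with the identity is an orthogonal family of d operators for the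
   trace form, so the table of eigenvalues of a common eigenbasis b is orthogonal up to a
   factor d; inverting it gives d |<b_i|v>|^2 = sum_k lambda_k(i) <v|G_k v>.  Two bases are
   unbiased because every operator of one class anticommutes with a hermitian involution of
   the other class, hence has expectation 0 on the eigenvectors of that involution.
   Conversely, a vector unbiased to all the bases has expectation 0 on every operator of
   every class, and for these classes a Nullstellensatz certificate shows that it must
   vanish.  The finitely many matrix identities involved are checked by computation on
   Gaussian-integer matrices. *)

From Stdlib Require Import NsatzTactic Lia.
From HB Require Import structures.
From mathcomp Require Import all_boot all_order all_algebra.
From mathcomp.real_closed Require Import mxtens.
From mathcomp Require Import ring.
Set Implicit Arguments. Unset Strict Implicit. Unset Printing Implicit Defensive.
Import Order.TTheory GRing.Theory Num.Theory.
Local Open Scope ring_scope.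
Local Open Scope sesquilinear_scope.

Section InnerProduct.
Variable C : numClosedFieldType.

Lemma dotCE d (u v : 'cV[C]_d) : dotC u v = (u ^t* *m v) 0 0.
Proof. by rewrite /dotC !mxE; apply: eq_bigr => k _; rewrite !mxE. Qed.

Lemma trmxC_mul m n p (A : 'M[C]_(m, n)) (B : 'M[C]_(n, p)) :
  (A *m B) ^t* = B ^t* *m A ^t*.
Proof. by rewrite trmx_mul map_mxM. Qed.

Lemma dotC_mulmxr d (u v : 'cV[C]_d) (M : 'M[C]_d) : dotC u (M *m v) = dotC (M ^t* *m u) v.
Proof. by rewrite !dotCE trmxC_mul trmxCK mulmxA. Qed.

Lemma dotC_sym d (u v : 'cV[C]_d) : dotC v u = (dotC u v)^*.
Proof.
by rewrite /dotC rmorph_sum; apply: eq_bigr => k _; rewrite rmorphM /= conjCK mulrC.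
Qed.

Lemma dotCZr d (u v : 'cV[C]_d) a : dotC u (a *: v) = a * dotC u v.
Proof. by rewrite /dotC mulr_sumr; apply: eq_bigr => k _; rewrite mxE mulrCA. Qed.

Lemma dotCZl d (u v : 'cV[C]_d) a : dotC (a *: u) v = a^* * dotC u v.
Proof. by rewrite /dotC mulr_sumr; apply: eq_bigr => k _; rewrite mxE rmorphM mulrA. Qed.

Lemma dotCNr d (u v : 'cV[C]_d) : dotC u (- v) = - dotC u v.
Proof. by rewrite -scaleN1r dotCZr mulN1r. Qed.

Lemma dotC_sumr d (u : 'cV[C]_d) I (r : seq I) (P : pred I) (F : I -> 'cV[C]_d) :
  dotC u (\sum_(i <- r | P i) F i) = \sum_(i <- r | P i) dotC u (F i).
Proof. by rewrite /dotC exchange_big; apply: eq_bigr => k _; rewrite summxE mulr_sumr. Qed.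

Lemma dotC_eq0 d (v : 'cV[C]_d) : dotC v v = 0 -> v = 0.
Proof.
rewrite /dotC => v0; apply/matrixP => i j; rewrite [j]ord1 mxE.
have sq k : (v k 0)^* * v k 0 = `|v k 0| ^+ 2 by rewrite normCK mulrC.
have /eqP : `|v i 0| ^+ 2 = 0.
  rewrite -sq; apply: (psumr_eq0P _ v0) => // k _.
  by rewrite sq exprn_ge0.
by rewrite expf_eq0 normr_eq0 => /eqP.
Qed.

End InnerProduct.

Section OrthonormalBasis.
Variables (C : numClosedFieldType) (d : nat) (b : 'I_d -> 'cV[C]_d).
Hypothesis b_on : orthonormal_basis b.

Definition basismx : 'M[C]_d := \matrix_(k, i) b i k 0.

Lemma basismx_unitary : basismx *m basismx ^t* = 1%:M.
Proof.
apply: mulmx1C; apply/matrixP => i j; rewrite !mxE -b_on /dotC.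
by apply: eq_bigr => k _; rewrite !mxE.
Qed.

Lemma dotC_basis_id i : dotC (b i) (b i) = 1.
Proof. by rewrite b_on eqxx. Qed.

Lemma orthonormal_expansion (v : 'cV[C]_d) : v = \sum_i dotC (b i) v *: b i.
Proof.
rewrite {1}(_ : v = basismx *m (basismx ^t* *m v)); last first.
  by rewrite mulmxA basismx_unitary mul1mx.
apply/matrixP => k j; rewrite [j]ord1 summxE !mxE; apply: eq_bigr => i _.
rewrite !mxE dotCE mulrC !mxE; congr (_ * _).
by apply: eq_bigr => l _; rewrite !mxE.
Qed.

Lemma dotC_eigenbasis (M : 'M[C]_d) (lam : 'I_d -> C) (v : 'cV[C]_d) :
  (forall i, M *m b i = lam i *: b i) ->
  dotC v (M *m v) = \sum_i lam i * `|dotC (b i) v| ^+ 2.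
Proof.
move=> Mb; rewrite {2}(orthonormal_expansion v) mulmx_sumr dotC_sumr.
apply: eq_bigr => i _; rewrite -scalemxAr Mb scalerA dotCZr (dotC_sym (b i) v) normCK.
by rewrite mulrCA mulrA.
Qed.

Lemma mxtrace_basis (M : 'M[C]_d) : \tr M = \sum_i dotC (b i) (M *m b i).
Proof.
rewrite -{1}[M]mulmx1 -basismx_unitary mulmxA mxtrace_mulC.
rewrite /mxtrace; apply: eq_bigr => i _; rewrite /dotC !mxE; apply: eq_bigr => k _; rewrite !mxE.
by congr (_ * _); apply: eq_bigr => l _; rewrite !mxE.
Qed.

End OrthonormalBasis.

Section TraceOrthogonalClass.
Variables (C : numClosedFieldType) (n : nat).
Local Notation d := n.+1.
Variable cls : seq 'M[C]_d.
Hypothesis cls_size : size cls = n.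

Definition clsop (k : 'I_d) := nth 1%:M (1%:M :: cls) k.

Hypothesis clsop_trace_orthogonal :
  forall k l : 'I_d, \tr (clsop k *m clsop l) = (k == l)%:R * d%:R.

Variable b : 'I_d -> 'cV[C]_d.
Hypothesis b_eig : common_eigenbasis cls b.

Let b_on := b_eig.1.

Definition eigval (k : 'I_d) i := dotC (b i) (clsop k *m b i).

Lemma clsop_mem (k : 'I_d) : k != ord0 -> clsop k \in cls.
Proof. by case: k => [[|k] lt_k_d] // _; rewrite /clsop /= mem_nth // cls_size. Qed.

Lemma clsopP g : g \in cls -> exists2 k : 'I_d, k != ord0 & g = clsop k.
Proof.
move=> cls_g; have lt_g_d : ((index g cls).+1 < d)%N.
  by rewrite ltnS; move: cls_g; rewrite -index_mem cls_size.
by exists (Ordinal lt_g_d); rewrite // /clsop /= nth_index.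
Qed.

Lemma eigval0 i : eigval ord0 i = 1.
Proof. by rewrite /eigval /clsop /= mul1mx dotC_basis_id. Qed.

Lemma clsop_eigen k i : clsop k *m b i = eigval k i *: b i.
Proof.
have [-> | /clsop_mem cls_k] := eqVneq k ord0; first by rewrite eigval0 scale1r mul1mx.
have [lam clsop_b] := b_eig.2 i _ cls_k.
by rewrite /eigval clsop_b dotCZr dotC_basis_id // mulr1.
Qed.

Lemma eigval_orthogonal_rows k l : \sum_i eigval k i * eigval l i = (k == l)%:R * d%:R.
Proof.
rewrite -clsop_trace_orthogonal (mxtrace_basis b_on); apply: eq_bigr => i _.
rewrite -mulmxA clsop_eigen -scalemxAr clsop_eigen scalerA dotCZr dotC_basis_id //.
by rewrite mulr1 mulrC.
Qed.

Lemma eigval_orthogonal_cols i j : \sum_k eigval k i * eigval k j = (i == j)%:R * d%:R.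
Proof.
pose L : 'M[C]_d := \matrix_(k, i) eigval k i.
have dN0 : d%:R != 0 :> C by rewrite pnatr_eq0.
have LLt : L *m (d%:R^-1 *: L^T) = 1%:M.
  apply/matrixP => k l; rewrite -scalemxAr !mxE.
  under eq_bigr do rewrite !mxE.
  by rewrite eigval_orthogonal_rows mulrCA mulVf // mulr1.
have /matrixP/(_ i j) := mulmx1C LLt.
rewrite -scalemxAl !mxE => E.
apply: (mulfI (invr_neq0 dN0)); rewrite [RHS]mulrCA mulVf // mulr1 -E.
by congr (_ * _); apply: eq_bigr => k _; rewrite !mxE.
Qed.

Lemma dotC_clsop k v : dotC v (clsop k *m v) = \sum_i eigval k i * `|dotC (b i) v| ^+ 2.
Proof. exact/(dotC_eigenbasis b_on)/clsop_eigen. Qed.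

(* Column orthogonality of the eigenvalue table inverts [dotC_clsop]. *)
Lemma overlap_expectations v i :
  d%:R * `|dotC (b i) v| ^+ 2 = \sum_k eigval k i * dotC v (clsop k *m v).
Proof.
under eq_bigr do rewrite dotC_clsop mulr_sumr.
rewrite exchange_big /=.
under eq_bigr do under eq_bigr do rewrite mulrA.
under eq_bigr do rewrite -mulr_suml eigval_orthogonal_cols.
rewrite (bigD1 i) //= eqxx mul1r big1 ?addr0 // => j /negbTE ji.
by rewrite eq_sym ji !mul0r.
Qed.

Lemma unbiased_expectation_eq0 v :
  (forall i, `|dotC v (b i)| ^+ 2 = dotC v v / d%:R) ->
  forall g, g \in cls -> dotC v (g *m v) = 0.
Proof.
move=> v_unb g /clsopP[k k_neq0 ->].
rewrite dotC_clsop (eq_bigr (fun i => eigval k i * eigval ord0 i * (dotC v v / d%:R))).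
  by rewrite -mulr_suml eigval_orthogonal_rows (negbTE k_neq0) !mul0r.
by move=> i _; rewrite eigval0 mulr1 dotC_sym norm_conjC v_unb.
Qed.

Lemma expectation_eq0_unbiased v :
  dotC v v = 1 -> (forall g, g \in cls -> dotC v (g *m v) = 0) ->
  forall i, `|dotC (b i) v| ^+ 2 = d%:R^-1.
Proof.
move=> v_unit v_exp0 i; have dN0 : d%:R != 0 :> C by rewrite pnatr_eq0.
apply: (mulfI dN0); rewrite overlap_expectations mulfV // (bigD1 ord0) //=.
rewrite big1 => [|k k_neq0]; last by rewrite v_exp0 ?mulr0 // clsop_mem.
by rewrite addr0 eigval0 /clsop /= mul1mx v_unit mulr1.
Qed.

End TraceOrthogonalClass.

Section Criterion.
Variable C : numClosedFieldType.

(* With [mu = ±1]: <v|g v> = <v|g h v>/mu = - <v|h g v>/mu = - <v|g v>. *)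
Lemma anticommute_expectation_eq0 d (g h : 'M[C]_d) (v : 'cV[C]_d) mu :
  g *m h = - (h *m g) -> h ^t* = h -> h *m h = 1%:M -> h *m v = mu *: v ->
  dotC v v = 1 -> dotC v (g *m v) = 0.
Proof.
move=> gh_anti h_herm h_inv hv v_unit.
have mu_exp : mu = dotC v (h *m v) by rewrite hv dotCZr v_unit mulr1.
have mu_real : mu^* = mu by rewrite mu_exp -dotC_sym -{1}h_herm -dotC_mulmxr.
have mu_sq : mu * mu = 1.
  have := congr1 (fun M => dotC v (M *m v)) h_inv.
  by rewrite /= mul1mx v_unit -mulmxA hv -scalemxAr hv scalerA dotCZr v_unit mulr1.
have exp_opp : mu * dotC v (g *m v) = - (mu * dotC v (g *m v)).
  transitivity (- dotC v (h *m (g *m v))).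
    by rewrite -dotCZr scalemxAr -hv [in LHS]mulmxA gh_anti mulNmx dotCNr mulmxA.
  by rewrite dotC_mulmxr h_herm hv dotCZl mu_real.
have /eqP : (mu * dotC v (g *m v)) *+ 2 = 0 by rewrite mulr2n {1}exp_opp addNr.
rewrite mulrn_eq0 /= => /eqP mu_exp0.
by rewrite -[dotC v _]mul1r -mu_sq -mulrA mu_exp0 mulr0.
Qed.

Theorem MUB_strongly_unextendible_criterion n m (cls : 'I_m -> seq 'M[C]_n.+1) :
  (forall c, size (cls c) = n) ->
  (forall c (k l : 'I_n.+1),
     \tr (clsop (cls c) k *m clsop (cls c) l) = (k == l)%:R * n.+1%:R) ->
  (forall c c', c != c' -> forall g, g \in cls c -> exists h,
     [/\ h \in cls c', g *m h = - (h *m g), h ^t* = h & h *m h = 1%:M]) ->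
  (forall v : 'cV[C]_n.+1,
     (forall c g, g \in cls c -> dotC v (g *m v) = 0) -> dotC v v = 0) ->
  forall B, (forall c, common_eigenbasis (cls c) (B c)) ->
  MUB_set B /\ strongly_unextendible B.
Proof.
move=> cls_size cls_tr cls_anti cls_quad B B_eig; split.
  move=> c c' cc' i j.
  apply: (expectation_eq0_unbiased (cls_size c) (cls_tr c) (B_eig c)).
    exact: (dotC_basis_id (B_eig c').1).
  move=> g cls_g; have [h [cls_h gh_anti h_herm h_inv]] := cls_anti _ _ cc' _ cls_g.
  have [mu h_eig] := (B_eig c').2 j h cls_h.
  exact: anticommute_expectation_eq0 gh_anti h_herm h_inv h_eig (dotC_basis_id (B_eig c').1 j).
move=> v v_unb; apply/dotC_eq0/cls_quad => c g.
exact: (unbiased_expectation_eq0 (cls_size c) (cls_tr c) (B_eig c) (v_unb c)).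
Qed.

End Criterion.

Definition gauss := (int * int)%type.
Definition g0 : gauss := (0, 0).
Definition g1 : gauss := (1, 0).
Definition gN1 : gauss := (-1, 0).
Definition gI : gauss := (0, 1).
Definition gNI : gauss := (0, -1).
Definition gadd (a b : gauss) : gauss := (a.1 + b.1, a.2 + b.2).
Definition gmul (a b : gauss) : gauss := (a.1 * b.1 - a.2 * b.2, a.1 * b.2 + a.2 * b.1).
Definition gopp (a : gauss) : gauss := (- a.1, - a.2).
Definition gconj (a : gauss) : gauss := (a.1, - a.2).
Definition gsum (s : seq gauss) : gauss := foldr gadd g0 s.

(* Gaussian-integer matrices as functions on [nat], so that [vm_compute] can evaluate the
   checks below; only the entries below the dimension matter. *)
Definition smx := nat -> nat -> gauss.

(* Tabulating makes [vm_compute] evaluate each entry of a product only once. *)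
Definition smx_tab n (A : smx) : smx :=
  let rows := mkseq (fun i => mkseq (A i) n) n in fun i j => nth g0 (nth [::] rows i) j.

Definition smx_mul n (A B : smx) : smx :=
  smx_tab n (fun i j => gsum [seq gmul (A i k) (B k j) | k <- iota 0 n]).
Definition smx_tens p (A B : smx) : smx :=
  fun i j => gmul (A (i %/ p)%N (j %/ p)%N) (B (i %% p)%N (j %% p)%N).
Definition smx_opp (A : smx) : smx := fun i j => gopp (A i j).
Definition smx_adj (A : smx) : smx := fun i j => gconj (A j i).
Definition smx_tr n (A : smx) : gauss := gsum [seq A i i | i <- iota 0 n].
Definition smx_scalar (a : gauss) : smx := fun i j => if i == j then a else g0.
Definition smx_eqb n (A B : smx) : bool :=
  all (fun i => all (fun j => A i j == B i j) (iota 0 n)) (iota 0 n).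

Definition smx_X : smx := fun i j => if i == j then g0 else g1.
Definition smx_Y : smx := fun i j => if i == j then g0 else if i == 0%N then gNI else gI.
Definition smx_Z : smx := fun i j => if i == j then (if i == 0%N then g1 else gN1) else g0.

(* Pauli operators are encoded by 0, 1, 2, 3 for I, X, Y, Z. *)
Definition smx_pauli (a : nat) : smx :=
  match a with 0 => smx_scalar g1 | 1 => smx_X | 2 => smx_Y | _ => smx_Z end.
Definition smx_pauli2 (t : nat * nat) : smx :=
  smx_tab 4 (smx_tens 2 (smx_pauli t.1) (smx_pauli t.2)).
Definition smx_pauli3 (t : nat * nat * nat) : smx :=
  smx_tab 8 (smx_tens 2 (smx_tens 2 (smx_pauli t.1.1) (smx_pauli t.1.2)) (smx_pauli t.2)).

Definition smx_cls (s : seq smx) (k : nat) : smx := nth (smx_scalar g1) (smx_scalar g1 :: s) k.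

Definition trace_orthogonalb n m (cls : nat -> seq smx) :=
  all (fun c => all (fun k => all (fun l =>
     smx_tr n (smx_mul n (smx_cls (cls c) k) (smx_cls (cls c) l))
       == if k == l then (Posz n, 0) else g0)
     (iota 0 n)) (iota 0 n)) (iota 0 m).

Definition anticommutingb n m (cls : nat -> seq smx) :=
  all (fun c => all (fun c' => (c != c') ==> all (fun g => has (fun h =>
     [&& smx_eqb n (smx_mul n g h) (smx_opp (smx_mul n h g)),
         smx_eqb n (smx_adj h) h & smx_eqb n (smx_mul n h h) (smx_scalar g1)])
     (cls c')) (cls c)) (iota 0 m)) (iota 0 m).

Definition eigenvectorsb n m (cls : nat -> seq smx) (W : nat -> smx) :=
  all (fun c => all (fun g => let GW := smx_mul n g (W c) in all (fun i => has (fun mu =>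
      all (fun r => GW r i == gmul mu (W c r i)) (iota 0 n)) [:: g1; gN1])
    (iota 0 n)) (cls c)) (iota 0 m).

Definition orthogonal_columnsb n m (W : nat -> smx) :=
  all (fun c => smx_eqb n (smx_mul n (smx_adj (W c)) (W c)) (smx_scalar (Posz n, 0)))
    (iota 0 m).

Section GaussianMatrices.
Variable C : numClosedFieldType.

Definition gaussC (a : gauss) : C := a.1%:~R + a.2%:~R * 'i.

Lemma gaussC0 : gaussC g0 = 0. Proof. by rewrite /gaussC mul0r addr0. Qed.
Lemma gaussC1 : gaussC g1 = 1. Proof. by rewrite /gaussC mul0r addr0. Qed.
Lemma gaussCN1 : gaussC gN1 = -1. Proof. by rewrite /gaussC mul0r addr0. Qed.
Lemma gaussCI : gaussC gI = 'i. Proof. by rewrite /gaussC mul1r add0r. Qed.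
Lemma gaussCNI : gaussC gNI = - 'i. Proof. by rewrite /gaussC mulN1r add0r. Qed.
Lemma gaussC_nat (k : nat) : gaussC (Posz k, 0) = k%:R.
Proof. by rewrite /gaussC mul0r addr0. Qed.

Lemma gaussC_add a b : gaussC (gadd a b) = gaussC a + gaussC b.
Proof. by rewrite /gaussC !intrD mulrDl addrACA. Qed.

Lemma gaussC_mul a b : gaussC (gmul a b) = gaussC a * gaussC b.
Proof.
have sqrI : 'i * 'i = -1 :> C by rewrite -expr2 sqrCi.
rewrite /gaussC /= intrB intrD !intrM.
set x1 := a.1%:~R; set x2 := a.2%:~R; set y1 := b.1%:~R; set y2 := b.2%:~R.
have -> : (x1 + x2 * 'i) * (y1 + y2 * 'i) =
  x1 * y1 + x2 * y2 * ('i * 'i) + (x1 * y2 + x2 * y1) * 'i :> C by ring.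
by rewrite sqrI; ring.
Qed.

Lemma gaussC_opp a : gaussC (gopp a) = - gaussC a.
Proof. by rewrite /gaussC !intrN mulNr opprD. Qed.

Lemma gaussC_conj a : (gaussC a)^* = gaussC (gconj a).
Proof. by rewrite /gaussC rmorphD rmorphM /= !rmorph_int conjCi intrN mulrN mulNr. Qed.

Lemma gaussC_sum s : gaussC (gsum s) = \sum_(a <- s) gaussC a.
Proof.
by elim: s => [|a s IHs]; rewrite ?big_nil ?gaussC0 // big_cons gaussC_add IHs.
Qed.

Definition mx_of n (A : smx) : 'M[C]_n := \matrix_(i, j) gaussC (A i j).

Lemma sum_ord_iota n (F : nat -> C) : \sum_(k < n) F k = \sum_(k <- iota 0 n) F k.
Proof. by rewrite -(big_mkord xpredT) /index_iota subn0. Qed.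

Lemma smx_tabE n A i j : (i < n)%N -> (j < n)%N -> smx_tab n A i j = A i j.
Proof. by move=> lt_i lt_j; rewrite /smx_tab !nth_mkseq. Qed.

Lemma mx_of_tab n A : mx_of n (smx_tab n A) = mx_of n A.
Proof. by apply/matrixP => i j; rewrite !mxE smx_tabE. Qed.

Lemma mx_of_mul n A B : mx_of n A *m mx_of n B = mx_of n (smx_mul n A B).
Proof.
apply/matrixP => i j; rewrite !mxE /smx_mul smx_tabE // gaussC_sum big_map -sum_ord_iota.
by apply: eq_bigr => k _; rewrite !mxE gaussC_mul.
Qed.

Lemma mx_of_tens m p A B : mx_of m A *t mx_of p B = mx_of (m * p) (smx_tens p A B).
Proof. by apply/matrixP => i j; rewrite !mxE gaussC_mul. Qed.

Lemma mx_of_opp n A : mx_of n (smx_opp A) = - mx_of n A.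
Proof. by apply/matrixP => i j; rewrite !mxE gaussC_opp. Qed.

Lemma mx_of_adj n A : (mx_of n A) ^t* = mx_of n (smx_adj A).
Proof. by apply/matrixP => i j; rewrite !mxE gaussC_conj. Qed.

Lemma mx_of_tr n A : \tr (mx_of n A) = gaussC (smx_tr n A).
Proof.
by rewrite gaussC_sum big_map -sum_ord_iota; apply: eq_bigr => i _; rewrite mxE.
Qed.

Lemma mx_of_scalar n a : mx_of n (smx_scalar a) = (gaussC a)%:M.
Proof.
apply/matrixP => i j; rewrite !mxE /smx_scalar -[(i : nat) == j]/(i == j).
by case: (i == j); rewrite ?gaussC0.
Qed.

Lemma all_iota_lt (P : pred nat) n k : all P (iota 0 n) -> (k < n)%N -> P k.
Proof. by move=> /allP P_iota lt_k; apply: P_iota; rewrite mem_iota. Qed.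

Lemma mx_of_eqb n A B : smx_eqb n A B -> mx_of n A = mx_of n B.
Proof.
move=> AB; apply/matrixP => i j; rewrite !mxE.
by have /eqP -> := all_iota_lt (all_iota_lt AB (ltn_ord i)) (ltn_ord j).
Qed.

Lemma pauliE : [/\ pI C = mx_of 2 (smx_pauli 0), pX C = mx_of 2 (smx_pauli 1),
  pY C = mx_of 2 (smx_pauli 2) & pZ C = mx_of 2 (smx_pauli 3)].
Proof.
split; apply/matrixP => i j; rewrite !mxE /=;
  by case: i j => [[|[|//]] ?] [[|[|//]] ?];
     rewrite /= ?gaussC0 ?gaussC1 ?gaussCN1 ?gaussCI ?gaussCNI.
Qed.

End GaussianMatrices.

Lemma nth_map_default (T U : Type) (f : T -> U) x s k :
  nth (f x) (map f s) k = f (nth x s k).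
Proof. by elim: s k => [|y s IHs] [|k] //=. Qed.

(* Keeps the polynomial equations handed to [nsatz] small. *)
Definition smx_support n (A : smx) : seq (nat * nat * gauss) :=
  [seq t <- flatten [seq [seq (i, j, A i j) | j <- iota 0 n] | i <- iota 0 n] | t.2 != g0].

Section Checks.
Variables (C : numClosedFieldType) (n m : nat).
Local Notation d := n.+1.

Definition hform (x : nat -> C) (supp : seq (nat * nat * gauss)) : C :=
  \sum_(t <- supp) (x t.1.1)^* * gaussC C t.2 * x t.1.2.

Lemma dotC_mx_of (v : 'cV[C]_d) A :
  dotC v (mx_of C d A *m v) = hform (fun k => v (inord k) 0) (smx_support d A).
Proof.
have sum_inord (F : 'I_d -> C) : \sum_i F i = \sum_(k <- iota 0 d) F (inord k).
  by rewrite -sum_ord_iota; apply: eq_bigr => i _; rewrite inord_val.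
rewrite /hform /smx_support big_filter big_mkcond big_flatten big_map /dotC sum_inord.
apply: eq_big_seq => i; rewrite mem_iota => /andP[_ lt_i].
rewrite mxE sum_inord mulr_sumr big_map; apply: eq_big_seq => j; rewrite mem_iota.
move=> /andP[_ lt_j]; rewrite !mxE /= !inordK //.
by case: eqP => [->|_] /=; rewrite ?gaussC0 ?mul0r ?mulr0 // mulrA.
Qed.

Lemma dotC_col (M : 'M[C]_d) i j : dotC (col i M) (col j M) = (M ^t* *m M) i j.
Proof. by rewrite /dotC !mxE; apply: eq_bigr => k _; rewrite !mxE. Qed.

Variables (scls : nat -> seq smx) (cls : 'I_m -> seq 'M[C]_d).
Hypothesis clsE : forall c : 'I_m, cls c = map (mx_of C d) (scls c).

Lemma clsop_mx_of s k : clsop (map (mx_of C d) s) k = mx_of C d (smx_cls s k).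
Proof.
rewrite /clsop; have -> : 1%:M = mx_of C d (smx_scalar g1) by rewrite mx_of_scalar gaussC1.
by rewrite -map_cons nth_map_default.
Qed.

Lemma mem_clsP (c : 'I_m) g :
  g \in cls c -> exists2 k, (k < size (scls c))%N & g = mx_of C d (nth (smx_scalar g1) (scls c) k).
Proof.
rewrite clsE => /(nthP 0); rewrite size_map => -[k lt_k <-].
by exists k; rewrite // (nth_map (smx_scalar g1)).
Qed.

Lemma mem_cls (c : 'I_m) k :
  (k < size (scls c))%N -> mx_of C d (nth (smx_scalar g1) (scls c) k) \in cls c.
Proof. by move=> lt_k; rewrite clsE -nth_map_default mem_nth ?size_map. Qed.

Hypothesis scls_size : all (fun c => size (scls c) == n) (iota 0 m).

Lemma cls_size c : size (cls c) = n.
Proof. by rewrite clsE size_map; apply/eqP/(all_iota_lt scls_size (ltn_ord c)). Qed.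

Lemma MUB_strongly_unextendible_of_checks :
  trace_orthogonalb d m scls -> anticommutingb d m scls ->
  (forall x : nat -> C,
     (forall c k, (c < m)%N -> (k < n)%N ->
        hform x (smx_support d (nth (smx_scalar g1) (scls c) k)) = 0) ->
     hform x (smx_support d (smx_scalar g1)) = 0) ->
  forall B, (forall c, common_eigenbasis (cls c) (B c)) -> MUB_set B /\ strongly_unextendible B.
Proof.
move=> scls_tr scls_anti no_isotropic; apply: MUB_strongly_unextendible_criterion.
- exact: cls_size.
- move=> c k l; rewrite clsE !clsop_mx_of mx_of_mul mx_of_tr.
  have /all_iota_lt/(_ (ltn_ord k))/all_iota_lt/(_ (ltn_ord l))/eqP -> :=
    all_iota_lt scls_tr (ltn_ord c).
  by rewrite -[(k : nat) == l]/(k == l); case: (k == l); rewrite ?gaussC0 ?mul0r ?mul1r ?gaussC_nat.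
- move=> c c' cc' g /mem_clsP[k lt_k ->].
  have := all_iota_lt (all_iota_lt scls_anti (ltn_ord c)) (ltn_ord c').
  rewrite -[(c : nat) != c']/(c != c') cc' => /(all_nthP (smx_scalar g1))/(_ k lt_k).
  case/(has_nthP (smx_scalar g1)) => k' lt_k' /and3P[anti herm inv].
  exists (mx_of C d (nth (smx_scalar g1) (scls c') k')); split; first exact: mem_cls.
  + by rewrite !mx_of_mul (mx_of_eqb C anti) mx_of_opp.
  + by rewrite mx_of_adj (mx_of_eqb C herm).
  + by rewrite mx_of_mul (mx_of_eqb C inv) mx_of_scalar gaussC1.
- move=> v v_exp0; rewrite -[v in dotC _ v]mul1mx -gaussC1 -mx_of_scalar dotC_mx_of.
  apply: no_isotropic => c k lt_c lt_k; rewrite -dotC_mx_of (v_exp0 (Ordinal lt_c)) //.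
  by apply: mem_cls; rewrite (eqP (all_iota_lt scls_size lt_c)).
Qed.

Lemma common_eigenbases_of_checks (W : nat -> smx) (a : gauss) :
  eigenvectorsb d m scls W -> orthogonal_columnsb d m W -> gmul (gconj a) a = (Posz d, 0) ->
  exists B : 'I_m -> 'I_d -> 'cV[C]_d, forall c, common_eigenbasis (cls c) (B c).
Proof.
move=> W_eig W_orth a_norm.
have norm_a : (gaussC C a)^* * gaussC C a = d%:R.
  by rewrite gaussC_conj -gaussC_mul a_norm gaussC_nat.
have aN0 : gaussC C a != 0.
  by apply/eqP => a0; move: norm_a; rewrite a0 mulr0 => /eqP; rewrite eq_sym pnatr_eq0.
exists (fun c i => (gaussC C a)^-1 *: col i (mx_of C d (W c))) => c; split.
  move=> i j; rewrite dotCZl dotCZr dotC_col mx_of_adj mx_of_mul.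
  rewrite (mx_of_eqb C (all_iota_lt W_orth (ltn_ord c))) mx_of_scalar gaussC_nat mxE.
  by rewrite mulrA fmorphV -invfM norm_a mulrnAr mulVf ?pnatr_eq0.
move=> i g /mem_clsP[k lt_k ->].
have /(all_nthP (smx_scalar g1))/(_ k lt_k) := all_iota_lt W_eig (ltn_ord c).
move=> /all_iota_lt/(_ (ltn_ord i))/hasP[mu _ W_col].
exists (gaussC C mu); rewrite -scalemxAr scalerA mulrC -scalerA; congr (_ *: _).
apply/matrixP => r z; rewrite [z]ord1 !colE mulmxA mx_of_mul -!colE !mxE.
by rewrite (eqP (all_iota_lt W_col (ltn_ord r))) gaussC_mul.
Qed.

End Checks.

#[local] Instance C_ring_ops (C : numClosedFieldType) :
  @Ncring.Ring_ops C 0 1 +%R *%R (fun x y => x - y) -%R eq := {}.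

#[local] Instance C_ring (C : numClosedFieldType) : Ncring.Ring (Ro := @C_ring_ops C).
Proof.
constructor=> //.
- exact: eq_equivalence.
- by move=> x y -> z w ->.
- by move=> x y -> z w ->.
- by move=> x y -> z w ->.
- by move=> x y ->.
- exact: add0r.
- exact: addrC.
- exact: addrA.
- exact: mul1r.
- exact: mulr1.
- exact: mulrA.
- exact: mulrDl.
- move=> x y z; exact: mulrDr.
- exact: subrr.
Defined.

#[local] Instance C_cring (C : numClosedFieldType) : Cring.Cring (Rr := @C_ring C).
Proof. exact: mulrC. Defined.

#[local] Instance C_domain (C : numClosedFieldType) :
  Integral_domain.Integral_domain (Rcr := @C_cring C).
Proof.
constructor; last exact/eqP/oner_neq0.
by move=> x y /eqP; rewrite mulf_eq0 => /orP[/eqP|/eqP]; [left|right].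
Qed.

Section NsatzConstants.
Variable C : numClosedFieldType.

Lemma IPR_natr (p : positive) : NsatzTactic.IPR p = (Pos.to_nat p)%:R :> C.
Proof.
have IPR_xO q : NsatzTactic.IPR q~0 = 2%:R * NsatzTactic.IPR q :> C.
  by case: q => [q|q|] /=; rewrite ?mulr1.
have IPR_xI q : NsatzTactic.IPR q~1 = 1 + 2%:R * NsatzTactic.IPR q :> C.
  by case: q => [q|q|] /=; rewrite ?mulr1.
elim: p => [p IHp|p IHp|] //.
- by rewrite IPR_xI IHp Pos2Nat.inj_xI -natrM nat1r.
- by rewrite IPR_xO IHp Pos2Nat.inj_xO -natrM.
Qed.

(* [nsatz] leaves side goals stating that some positive integer constants are nonzero. *)
Lemma nsatz_const_neq0 (c : positive) fv :
  NsatzTactic.interpret3 (Ring_polynom.PEc (Zpos c)) fv <> 0 :> C.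
Proof.
rewrite /= IPR_natr; apply/eqP; rewrite pnatr_eq0; apply/eqP.
by have := Pos2Nat.is_pos c; lia.
Qed.

End NsatzConstants.

Definition pauli_classes4 : seq (seq (nat * nat)) :=
  [:: [:: (2,2); (0,2); (2,0)]; [:: (2,3); (1,1); (3,2)]; [:: (3,0); (0,3); (3,3)]].
Definition pauli_classes8 : seq (seq (nat * nat * nat)) :=
  [:: [:: (0,0,2); (2,2,0); (2,2,2); (0,2,2); (2,0,0); (0,2,0); (2,0,2)];
      [:: (0,1,0); (1,0,1); (1,1,1); (0,1,1); (0,0,1); (1,0,0); (1,1,0)];
      [:: (3,0,0); (0,3,3); (3,3,3); (0,0,3); (0,3,0); (3,0,3); (3,3,0)];
      [:: (0,3,1); (2,3,0); (2,0,1); (3,2,2); (1,2,3); (3,1,3); (1,1,2)];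
      [:: (1,0,3); (1,2,0); (0,2,3); (3,1,1); (2,3,1); (2,1,2); (3,3,2)]].
Definition smx_classes4 (c : nat) : seq smx := map smx_pauli2 (nth [::] pauli_classes4 c).
Definition smx_classes8 (c : nat) : seq smx := map smx_pauli3 (nth [::] pauli_classes8 c).

Definition smx_of_cols (cols : seq (seq gauss)) : smx := fun r i => nth g0 (nth [::] cols i) r.
(* Columns of common eigenvectors; dividing by 2 (d = 4) and by 2 + 2i (d = 8)
   makes them orthonormal. *)
Definition eigvecs4 (c : nat) : smx :=
  match c with
  | 0 => smx_of_cols
      [:: [:: g1; gI; gI; gN1];
          [:: g1; gI; gNI; g1];
          [:: g1; gNI; gI; g1];
          [:: g1; gNI; gNI; gN1]]
  | 1 => smx_of_cols
      [:: [:: g1; gI; gI; g1];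
          [:: g1; gI; gNI; gN1];
          [:: g1; gNI; gI; gN1];
          [:: g1; gNI; gNI; g1]]
  | _ => smx_scalar (2, 0)
  end.
Definition eigvecs8 (c : nat) : smx :=
  match c with
  | 0 => smx_of_cols
      [:: [:: g1; gI; gI; gN1; gI; gN1; gN1; gNI];
          [:: g1; gI; gI; gN1; gNI; g1; g1; gI];
          [:: g1; gI; gNI; g1; gI; gN1; g1; gI];
          [:: g1; gI; gNI; g1; gNI; g1; gN1; gNI];
          [:: g1; gNI; gI; g1; gI; g1; gN1; gI];
          [:: g1; gNI; gI; g1; gNI; gN1; g1; gNI];
          [:: g1; gNI; gNI; gN1; gI; g1; g1; gNI];
          [:: g1; gNI; gNI; gN1; gNI; gN1; gN1; gI]]
  | 1 => smx_of_cols
      [:: [:: g1; g1; g1; g1; g1; g1; g1; g1];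
          [:: g1; g1; g1; g1; gN1; gN1; gN1; gN1];
          [:: g1; g1; gN1; gN1; g1; g1; gN1; gN1];
          [:: g1; g1; gN1; gN1; gN1; gN1; g1; g1];
          [:: g1; gN1; g1; gN1; g1; gN1; g1; gN1];
          [:: g1; gN1; g1; gN1; gN1; g1; gN1; g1];
          [:: g1; gN1; gN1; g1; g1; gN1; gN1; g1];
          [:: g1; gN1; gN1; g1; gN1; g1; g1; gN1]]
  | 3 => smx_of_cols
      [:: [:: g1; g1; g1; gN1; gI; gI; gNI; gI];
          [:: g1; g1; g1; gN1; gNI; gNI; gI; gNI];
          [:: g1; g1; gN1; g1; gI; gI; gI; gNI];
          [:: g1; g1; gN1; g1; gNI; gNI; gNI; gI];
          [:: g1; gN1; g1; g1; gI; gNI; gNI; gNI];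
          [:: g1; gN1; g1; g1; gNI; gI; gI; gI];
          [:: g1; gN1; gN1; gN1; gI; gNI; gI; gI];
          [:: g1; gN1; gN1; gN1; gNI; gI; gNI; gNI]]
  | 4 => smx_of_cols
      [:: [:: g1; gI; gI; g1; g1; gNI; gI; gN1];
          [:: g1; gI; gI; g1; gN1; gI; gNI; g1];
          [:: g1; gI; gNI; gN1; g1; gNI; gNI; g1];
          [:: g1; gI; gNI; gN1; gN1; gI; gI; gN1];
          [:: g1; gNI; gI; gN1; g1; gI; gI; g1];
          [:: g1; gNI; gI; gN1; gN1; gNI; gNI; gN1];
          [:: g1; gNI; gNI; g1; g1; gI; gNI; gN1];
          [:: g1; gNI; gNI; g1; gN1; gNI; gI; g1]]
  | _ => smx_scalar (2, 2)
  end.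


Lemma classes4_checks : [/\ all (fun c => size (smx_classes4 c) == 3) (iota 0 3),
  trace_orthogonalb 4 3 smx_classes4, anticommutingb 4 3 smx_classes4,
  eigenvectorsb 4 3 smx_classes4 eigvecs4 & orthogonal_columnsb 4 3 eigvecs4].
Proof. by vm_compute. Qed.

Lemma classes8_checks : [/\ all (fun c => size (smx_classes8 c) == 7) (iota 0 5),
  trace_orthogonalb 8 5 smx_classes8, anticommutingb 8 5 smx_classes8,
  eigenvectorsb 8 5 smx_classes8 eigvecs8 & orthogonal_columnsb 8 5 eigvecs8].
Proof. by vm_compute. Qed.

Section PauliClasses.
Variable C : numClosedFieldType.

Lemma cls4E (c : 'I_3) : cls4 C c = map (mx_of C 4) (smx_classes4 c).
Proof.
rewrite /cls4 /C4_1 /C4_2 /C4_3 /t2; have [-> -> -> ->] := pauliE C.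
by case: c => [[|[|[|//]]] ?]; rewrite /= !mx_of_tens !mx_of_tab.
Qed.

Lemma cls8E (c : 'I_5) : cls8 C c = map (mx_of C 8) (smx_classes8 c).
Proof.
rewrite /cls8 /C8_1 /C8_2 /C8_3 /C8_4 /C8_5 /t3; have [-> -> -> ->] := pauliE C.
by case: c => [[|[|[|[|[|//]]]]] ?]; rewrite /= !mx_of_tens !mx_of_tab.
Qed.

Ltac expand_hform H :=
  match type of H with context [hform ?x ?supp] =>
    let supp' := eval vm_compute in supp in change supp with supp' in H end;
  rewrite /hform !big_cons big_nil /= ?gaussC1 ?gaussCN1 ?gaussCI ?gaussCNI in H.

Ltac expand_grid H m n :=
  let rec rows c := match c with
    | O => idtac
    | S ?c' => cols c' n; rows c'
    end
  with cols c k := match k with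
    | O => idtac
    | S ?k' => let E := fresh "E" in have E := H c k' erefl erefl; expand_hform E; cols c k'
    end in
  rows m.

(* Rabinowitsch trick: adjoining the inverse of the norm, [nsatz] derives [1 = 0]. *)
Ltac no_isotropic_tac m n :=
  let exp0 := fresh "exp0" in let normN0 := fresh "normN0" in
  let norm_inv := fresh "norm_inv" in let sqrI := fresh "sqrI" in
  intros exp0; apply/eqP; apply: contraT; intros normN0;
  pose proof (mulfV normN0) as norm_inv; expand_hform norm_inv;
  expand_grid exp0 m n; clear exp0 normN0;
  assert (sqrI : 'i * 'i = -1 :> C) by (rewrite -expr2 sqrCi; reflexivity);
  rewrite -(oner_eq0 C); apply/eqP; nsatz; exact: nsatz_const_neq0.

Lemma no_isotropic4 (x : nat -> C) :
  (forall c k, (c < 3)%N -> (k < 3)%N ->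
     hform x (smx_support 4 (nth (smx_scalar g1) (smx_classes4 c) k)) = 0) ->
  hform x (smx_support 4 (smx_scalar g1)) = 0.
Proof. no_isotropic_tac 3%N 3%N. Qed.

Lemma no_isotropic8 (x : nat -> C) :
  (forall c k, (c < 5)%N -> (k < 7)%N ->
     hform x (smx_support 8 (nth (smx_scalar g1) (smx_classes8 c) k)) = 0) ->
  hform x (smx_support 8 (smx_scalar g1)) = 0.
Proof. no_isotropic_tac 5%N 7%N. Qed.

End PauliClasses.

Theorem mainTheorem8 (C : numClosedFieldType) :
  ((exists B : 'I_3 -> 'I_4 -> 'cV[C]_4, forall k, common_eigenbasis (cls4 C k) (B k)) /\
   (forall B : 'I_3 -> 'I_4 -> 'cV[C]_4,
      (forall k, common_eigenbasis (cls4 C k) (B k)) ->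
      MUB_set B /\ strongly_unextendible B)) /\
  ((exists B : 'I_5 -> 'I_8 -> 'cV[C]_8, forall k, common_eigenbasis (cls8 C k) (B k)) /\
   (forall B : 'I_5 -> 'I_8 -> 'cV[C]_8,
      (forall k, common_eigenbasis (cls8 C k) (B k)) ->
      MUB_set B /\ strongly_unextendible B)).
Proof.
have [size4 tr4 anti4 eig4 orth4] := classes4_checks.
have [size8 tr8 anti8 eig8 orth8] := classes8_checks.
split; split.
- exact: (common_eigenbases_of_checks (@cls4E C) eig4 orth4 (a := (2, 0)) erefl).
- exact: (MUB_strongly_unextendible_of_checks (@cls4E C) size4 tr4 anti4 (@no_isotropic4 C)).
- exact: (common_eigenbases_of_checks (@cls8E C) eig8 orth8 (a := (2, 2)) erefl).
- exact: (MUB_strongly_unextendible_of_checks (@cls8E C) size8 tr8 anti8 (@no_isotropic8 C)).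
Qed.
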